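(* Let $T:X\rightrightarrows X^*$ be a maximal monotone operator on a real Banach space $X$ with $\mathrm{int}\,D_T\ne\emptyset$. Then $T$ is directionally inf bounded at every $x\in\mathrm{int}\,D_T$.
   Context: For $x\in X$ and $A\subset X$, $K_{x,A}=\{(1-t)x+ta: 0\le t\le1,\ a\in A\}$; $B(x,\epsilon)$ is the open ball. A monotone operator $T$ is directionally inf bounded at $x\in D_T$ if for every $y\in X$ there exist $\epsilon>0$ and $M>0$ such that for every $z\in K_{y,B(x,\epsilon)}\cap D_T$ there is $z^*\in T(z)$ with $\langle z^*,z-y\rangle\le M\|z-y\|$. *)

From Stdlib Require Import Reals.
Open Scope R_scope.

Record Banach : Type := {
  bcar :> Type;
  bzero : bcar;
  badd : bcar -> bcar -> bcar;
  bopp : bcar -> bcar;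
  bscal : R -> bcar -> bcar;
  bnorm : bcar -> R;
  badd_assoc : forall x y z, badd x (badd y z) = badd (badd x y) z;
  badd_comm : forall x y, badd x y = badd y x;
  badd_0 : forall x, badd x bzero = x;
  badd_opp : forall x, badd x (bopp x) = bzero;
  bscal_assoc : forall a b x, bscal a (bscal b x) = bscal (a * b) x;
  bscal_1 : forall x, bscal 1 x = x;
  bscal_distr_l : forall a x y, bscal a (badd x y) = badd (bscal a x) (bscal a y);
  bscal_distr_r : forall a b x, bscal (a + b) x = badd (bscal a x) (bscal b x);
  bnorm_nonneg : forall x, 0 <= bnorm x;
  bnorm_eq0 : forall x, bnorm x = 0 -> x = bzero;
  bnorm_scal : forall a x, bnorm (bscal a x) = Rabs a * bnorm x;
  bnorm_triangle : forall x y, bnorm (badd x y) <= bnorm x + bnorm y;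
  bcomplete : forall u : nat -> bcar,
    (forall eps, 0 < eps -> exists N, forall n m, (N <= n)%nat -> (N <= m)%nat ->
        bnorm (badd (u n) (bopp (u m))) < eps) ->
    exists l, forall eps, 0 < eps -> exists N, forall n, (N <= n)%nat ->
        bnorm (badd (u n) (bopp l)) < eps
}.

Definition bsub {X : Banach} (x y : X) : X := badd X x (bopp X y).

Definition in_dual {X : Banach} (f : X -> R) : Prop :=
  (forall x y, f (badd X x y) = f x + f y) /\
  (forall a x, f (bscal X a x) = a * f x) /\
  (exists M, forall x, Rabs (f x) <= M * bnorm X x).

(** A set-valued operator X ⇉ X^*, given by its graph. *)
Definition operator (X : Banach) := X -> (X -> R) -> Prop.

Definition dom {X : Banach} (T : operator X) (x : X) : Prop := exists xs, T x xs.

Definition dual_valued {X : Banach} (T : operator X) : Prop :=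
  forall x xs, T x xs -> in_dual xs.

Definition monotone {X : Banach} (T : operator X) : Prop :=
  forall x y xs ys, T x xs -> T y ys -> 0 <= xs (bsub x y) - ys (bsub x y).

Definition maximal_monotone {X : Banach} (T : operator X) : Prop :=
  dual_valued T /\ monotone T /\
  forall S : operator X, dual_valued S -> monotone S ->
    (forall x xs, T x xs -> S x xs) -> forall x xs, S x xs -> T x xs.

Definition oball {X : Banach} (x : X) (eps : R) (z : X) : Prop :=
  bnorm X (bsub z x) < eps.

Definition int_pts {X : Banach} (A : X -> Prop) (x : X) : Prop :=
  exists eps, 0 < eps /\ forall z, oball x eps z -> A z.

Definition Kcone {X : Banach} (x : X) (A : X -> Prop) (z : X) : Prop :=
  exists t a, 0 <= t <= 1 /\ A a /\
    z = badd X (bscal X (1 - t) x) (bscal X t a).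

Definition directionally_inf_bounded {X : Banach} (T : operator X) (x : X) : Prop :=
  dom T x /\
  forall y : X, exists eps M, 0 < eps /\ 0 < M /\
    forall z, Kcone y (oball x eps) z -> dom T z ->
      exists zs, T z zs /\ zs (bsub z y) <= M * bnorm X (bsub z y).

From Stdlib Require Import Reals Lra Classical IndefiniteDescription.
Open Scope R_scope.

(* For
   n : nat, the level set {v | <w*, v - w> <= n (1 + |w|) for all w* in T w}
   is closed, and by monotonicity every point of D_T lies in one of them.
   Applying Baire's theorem to the sets "v and 2x - v both lie in level n"
   (which cover a ball around x) yields a ball inside one of them; since level
   sets are midpoint-convex, level n then contains a ball B(x, rho) itself.
   This bounds the dual norm of every a* in T a for a near x (local
   boundedness).  Finally, for z = (1-t) y + t a on a segment ending at such
   an a, monotonicity between z and a gives <z*, z - y> <= M |z - y|. *)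

Section VectorAlgebra.
Variable X : Banach.

Lemma add0l (x : X) : badd X (bzero X) x = x.
Proof. rewrite badd_comm. apply badd_0. Qed.

Lemma add_cancel (a b c : X) : badd X a b = badd X a c -> b = c.
Proof.
  intros H. rewrite <- (add0l b), <- (add0l c), <- (badd_opp X a).
  rewrite (badd_comm X a (bopp X a)), <- !badd_assoc, H. reflexivity.
Qed.

Lemma scal0 (v : X) : bscal X 0 v = bzero X.
Proof.
  apply (add_cancel (bscal X 0 v)).
  rewrite badd_0, <- bscal_distr_r, Rplus_0_r. reflexivity.
Qed.

Lemma opp_scal (v : X) : bopp X v = bscal X (-1) v.
Proof.
  apply (add_cancel v). rewrite badd_opp. rewrite <- (bscal_1 X v) at 1.
  rewrite <- bscal_distr_r. replace (1 + -1) with 0 by ring. now rewrite scal0.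
Qed.

Lemma norm_opp (v : X) : bnorm X (bopp X v) = bnorm X v.
Proof.
  rewrite opp_scal, bnorm_scal, Rabs_left by lra. ring.
Qed.

Lemma norm0 : bnorm X (bzero X) = 0.
Proof. rewrite <- (scal0 (bzero X)), bnorm_scal, Rabs_R0. ring. Qed.

Lemma sub_self (a : X) : bsub a a = bzero X.
Proof. apply badd_opp. Qed.

Lemma sub_add (a b c : X) : badd X (bsub a b) (bsub b c) = bsub a c.
Proof.
  unfold bsub. rewrite <- badd_assoc. f_equal.
  rewrite badd_assoc, (badd_comm X (bopp X b) b), badd_opp, add0l. reflexivity.
Qed.

Lemma add_sub (c u : X) : bsub (badd X c u) c = u.
Proof.
  unfold bsub. rewrite (badd_comm X c u), <- badd_assoc, badd_opp, badd_0.
  reflexivity.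
Qed.

Lemma add_sub_cancel (b a : X) : badd X b (bsub a b) = a.
Proof.
  unfold bsub. rewrite badd_comm, <- badd_assoc, (badd_comm X (bopp X b) b),
    badd_opp, badd_0.
  reflexivity.
Qed.

Lemma opp_sub (a b : X) : bsub b a = bopp X (bsub a b).
Proof. apply (add_cancel (bsub a b)). rewrite sub_add, badd_opp. apply sub_self. Qed.

Lemma sub_sub_cancel (s p q : X) : bsub (bsub s q) (bsub s p) = bsub p q.
Proof. apply (add_cancel (bsub s p)). now rewrite add_sub_cancel, sub_add. Qed.

Lemma norm_sub_sym (a b : X) : bnorm X (bsub a b) = bnorm X (bsub b a).
Proof. now rewrite (opp_sub a b), norm_opp. Qed.

Lemma norm_sub_tri (a b c : X) :
  bnorm X (bsub a c) <= bnorm X (bsub a b) + bnorm X (bsub b c).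
Proof. rewrite <- (sub_add a b c). apply bnorm_triangle. Qed.

Lemma norm_le_sub (a b : X) : bnorm X a <= bnorm X (bsub a b) + bnorm X b.
Proof. pose proof (bnorm_triangle X b (bsub a b)) as H. rewrite add_sub_cancel in H. lra. Qed.

Lemma sub_norm_le (a b : X) : bnorm X (bsub a b) <= bnorm X a + bnorm X b.
Proof. unfold bsub. rewrite <- (norm_opp b). apply bnorm_triangle. Qed.

Lemma segment_sub (y a : X) t :
  bsub (badd X (bscal X (1 - t) y) (bscal X t a)) y = bscal X t (bsub a y).
Proof.
  unfold bsub. rewrite bscal_distr_l, (opp_scal y), bscal_assoc.
  rewrite (badd_comm X (bscal X (1 - t) y) (bscal X t a)), <- badd_assoc,
    <- bscal_distr_r.
  do 2 f_equal. ring.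
Qed.

Lemma segment_end (y a : X) : badd X (bscal X (1 - 1) y) (bscal X 1 a) = a.
Proof. replace (1 - 1) with 0 by ring. now rewrite scal0, bscal_1, add0l. Qed.

End VectorAlgebra.

Section DualElements.
Variables (X : Banach) (f : X -> R).
Hypothesis f_dual : in_dual f.

Lemma lin_add a b : f (badd X a b) = f a + f b.
Proof. apply f_dual. Qed.

Lemma lin_scal a v : f (bscal X a v) = a * f v.
Proof. apply f_dual. Qed.

Lemma lin0 : f (bzero X) = 0.
Proof. rewrite <- (scal0 X (bzero X)), lin_scal. ring. Qed.

Lemma lin_sub a b : f (bsub a b) = f a - f b.
Proof. unfold bsub. rewrite lin_add, opp_scal, lin_scal. ring. Qed.

Lemma lin_bound : exists M, 0 <= M /\ forall v, Rabs (f v) <= M * bnorm X v.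
Proof.
  destruct f_dual as [_ [_ [M HM]]]. exists (Rabs M). split; [apply Rabs_pos|].
  intros v. eapply Rle_trans; [apply HM|].
  apply Rmult_le_compat_r; [apply bnorm_nonneg | apply Rle_abs].
Qed.

Lemma lin_bound_of_ball K delta :
  0 < delta ->
  (forall d, bnorm X d < delta -> f d <= K) ->
  forall d, f d <= 2 * K / delta * bnorm X d.
Proof.
  intros Hdelta Hball d. pose proof (bnorm_nonneg X d) as Hd0.
  destruct (Req_dec (bnorm X d) 0) as [Hd|Hd].
  { rewrite Hd, (bnorm_eq0 X d Hd), lin0. lra. }
  set (s := delta / (2 * bnorm X d)).
  assert (Hs : 0 < s) by (unfold s; apply Rdiv_lt_0_compat; lra).
  assert (Hsd : bnorm X (bscal X s d) = delta / 2).
  { rewrite bnorm_scal, Rabs_pos_eq by lra. unfold s. field. lra. }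
  specialize (Hball (bscal X s d) ltac:(lra)). rewrite lin_scal in Hball.
  replace (f d) with (s * f d * (2 * bnorm X d / delta)) by (unfold s; field; lra).
  replace (2 * K / delta * bnorm X d) with (K * (2 * bnorm X d / delta))
    by (field; lra).
  apply Rmult_le_compat_r; [|exact Hball].
  apply Rmult_le_pos; [lra | left; apply Rinv_0_lt_compat; lra].
Qed.

End DualElements.

Section Baire.
Variable X : Banach.

Definition closed_set (A : X -> Prop) : Prop :=
  forall p, ~ A p -> exists r, 0 < r /\ forall q, bnorm X (bsub q p) < r -> ~ A q.

Lemma closed_and (A B : X -> Prop) :
  closed_set A -> closed_set B -> closed_set (fun v => A v /\ B v).
Proof.
  intros HA HB p Hp.
  destruct (classic (A p)) as [Ap|Ap].
  - assert (Bp : ~ B p) by tauto. destruct (HB p Bp) as [r [Hr Hq]].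
    exists r. split; [exact Hr|]. intros q Hqp [_ Bq]. exact (Hq q Hqp Bq).
  - destruct (HA p Ap) as [r [Hr Hq]].
    exists r. split; [exact Hr|]. intros q Hqp [Aq _]. exact (Hq q Hqp Aq).
Qed.

Lemma closed_preimage (A : X -> Prop) (g : X -> X) :
  (forall p q, bnorm X (bsub (g q) (g p)) <= bnorm X (bsub q p)) ->
  closed_set A -> closed_set (fun v => A (g v)).
Proof.
  intros Hg HA p Hp. destruct (HA (g p) Hp) as [r [Hr Hq]].
  exists r. split; [exact Hr|]. intros q Hqp. apply Hq.
  eapply Rle_lt_trans; [apply Hg | exact Hqp].
Qed.

Lemma shrink_ball (A : X -> Prop) (c p : X) rho :
  closed_set A -> bnorm X (bsub p c) < rho -> ~ A p ->
  exists rho', 0 < rho' /\ rho' <= rho / 2 /\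
    forall z, bnorm X (bsub z p) <= rho' -> bnorm X (bsub z c) < rho /\ ~ A z.
Proof.
  intros HA Hp Ap. destruct (HA p Ap) as [r [Hr Hfar]].
  pose proof (bnorm_nonneg X (bsub p c)).
  set (rho' := Rmin (r / 2) (Rmin ((rho - bnorm X (bsub p c)) / 2) (rho / 2))).
  assert (h1 : rho' <= r / 2) by apply Rmin_l.
  assert (h2 : rho' <= (rho - bnorm X (bsub p c)) / 2)
    by (eapply Rle_trans; [apply Rmin_r | apply Rmin_l]).
  assert (h3 : rho' <= rho / 2)
    by (eapply Rle_trans; [apply Rmin_r | apply Rmin_r]).
  exists rho'. split; [unfold rho'; repeat apply Rmin_glb_lt; lra|].
  split; [exact h3|]. intros z Hz. split.
  - pose proof (norm_sub_tri X z p c). lra.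
  - apply Hfar. lra.
Qed.

Lemma nested_centers (c : nat -> X) (r : nat -> R) :
  (forall k z, bnorm X (bsub z (c (S k))) <= r (S k) -> bnorm X (bsub z (c k)) <= r k) ->
  forall k m z, (k <= m)%nat ->
    bnorm X (bsub z (c m)) <= r m -> bnorm X (bsub z (c k)) <= r k.
Proof.
  intros Hnest k m z Hkm. induction Hkm as [|m Hkm IH]; intros Hz.
  - exact Hz.
  - apply IH, Hnest, Hz.
Qed.

(* Cantor's intersection theorem: nested closed balls with radii halving at
   each step have a common point (this is where completeness is used). *)
Lemma nested_balls_point (c : nat -> X) (r : nat -> R) :
  (forall k, 0 < r k) -> (forall k, r (S k) <= r k / 2) ->
  (forall k z, bnorm X (bsub z (c (S k))) <= r (S k) -> bnorm X (bsub z (c k)) <= r k) ->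
  exists l, forall k, bnorm X (bsub l (c k)) <= r k.
Proof.
  intros Hpos Hhalf Hnest.
  assert (Hsmall : forall k, r k <= r 0%nat * (/2) ^ k).
  { induction k; simpl; [lra|]. pose proof (Hhalf k). lra. }
  assert (Hc : forall k m, (k <= m)%nat -> bnorm X (bsub (c m) (c k)) <= r k).
  { intros k m Hkm. apply (nested_centers c r Hnest k m); [exact Hkm|].
    rewrite sub_self, norm0. apply Rlt_le, Hpos. }
  assert (Hcauchy : forall eps, 0 < eps -> exists N, forall n m, (N <= n)%nat ->
            (N <= m)%nat -> bnorm X (badd X (c n) (bopp X (c m))) < eps).
  { intros eps Heps. pose proof (Hpos 0%nat).
    destruct (pow_lt_1_zero (/2) ltac:(rewrite Rabs_pos_eq; lra) (eps / (2 * r 0%nat)))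
      as [N HN]; [apply Rdiv_lt_0_compat; lra|].
    exists N. intros n m Hn Hm.
    specialize (HN N (le_n N)). rewrite Rabs_pos_eq in HN by (apply pow_le; lra).
    assert (r 0%nat * (/2) ^ N < eps / 2).
    { replace (eps / 2) with (r 0%nat * (eps / (2 * r 0%nat))) by (field; lra).
      apply Rmult_lt_compat_l; lra. }
    pose proof (Hsmall N). pose proof (Hc N n Hn). pose proof (Hc N m Hm).
    pose proof (norm_sub_tri X (c n) (c N) (c m)) as Htr.
    rewrite (norm_sub_sym X (c N) (c m)) in Htr. unfold bsub in *. lra. }
  destruct (bcomplete X c Hcauchy) as [l Hlim]. exists l.
  intros k. apply Rnot_lt_le. intros Hlt.
  destruct (Hlim (bnorm X (bsub l (c k)) - r k)) as [N HN]; [lra|].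
  specialize (HN (max N k) (Nat.le_max_l _ _)).
  pose proof (Hc k (max N k) (Nat.le_max_r _ _)).
  pose proof (norm_sub_tri X l (c (max N k)) (c k)) as Htr.
  rewrite (norm_sub_sym X l (c (max N k))) in Htr. unfold bsub in *. lra.
Qed.

Fixpoint iterate {A : Type} (F : nat -> A -> A) (a0 : A) (k : nat) : A :=
  match k with O => a0 | S k => F k (iterate F a0 k) end.

Lemma baire (C : nat -> X -> Prop) (x0 : X) (r0 : R) :
  0 < r0 -> (forall n, closed_set (C n)) ->
  (forall z, bnorm X (bsub z x0) < r0 -> exists n, C n z) ->
  exists n c rho, 0 < rho /\ forall z, bnorm X (bsub z c) < rho -> C n z.
Proof.
  intros Hr0 Hclosed Hcov. apply NNPP. intros Hno.
  (* Otherwise every open ball contains a closed ball of half the radius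
     avoiding any prescribed [C n]. *)
  assert (Hstep : forall n (s : X * R), exists s' : X * R, 0 < snd s ->
     0 < snd s' /\ snd s' <= snd s / 2 /\
     forall z, bnorm X (bsub z (fst s')) <= snd s' ->
       bnorm X (bsub z (fst s)) < snd s /\ ~ C n z).
  { intros n [c rho]. simpl. destruct (Rlt_dec 0 rho) as [Hrho|Hrho].
    2: { exists (c, rho). intros; contradiction. }
    assert (Hout : exists p, bnorm X (bsub p c) < rho /\ ~ C n p).
    { apply NNPP. intros Hp. apply Hno. exists n, c, rho. split; [exact Hrho|].
      intros z Hz. apply NNPP. intros Cz. apply Hp. now exists z. }
    destruct Hout as [p [Hp Cp]].
    destruct (shrink_ball (C n) c p rho (Hclosed n) Hp Cp) as [rho' Hrho'].
    now exists (p, rho'). }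
  set (F := fun n s => proj1_sig (constructive_indefinite_description _ (Hstep n s))).
  assert (HF : forall n s, 0 < snd s -> 0 < snd (F n s) /\ snd (F n s) <= snd s / 2 /\
      forall z, bnorm X (bsub z (fst (F n s))) <= snd (F n s) ->
        bnorm X (bsub z (fst s)) < snd s /\ ~ C n z).
  { intros n s. unfold F. now destruct (constructive_indefinite_description _ _). }
  set (u := iterate F (x0, r0)).
  assert (Hpos : forall k, 0 < snd (u k)).
  { induction k; simpl; [exact Hr0 | apply HF, IHk]. }
  assert (Hu : forall k z, bnorm X (bsub z (fst (u (S k)))) <= snd (u (S k)) ->
      bnorm X (bsub z (fst (u k))) < snd (u k) /\ ~ C k z)
    by (intros k; apply (HF k (u k) (Hpos k))).
  destruct (nested_balls_point (fun k => fst (u k)) (fun k => snd (u k)) Hpos)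
    as [l Hl].
  - intros k. apply (HF k (u k) (Hpos k)).
  - intros k z Hz. apply Rlt_le, (Hu k z Hz).
  - destruct (Hu 0%nat l (Hl 1%nat)) as [Hl0 _].
    destruct (Hcov l Hl0) as [n Hn].
    exact (proj2 (Hu n l (Hl (S n))) Hn).
Qed.

End Baire.

Section MonotoneOperator.
Variables (X : Banach) (T : operator X).
Hypotheses (T_dual : dual_valued T) (T_mon : monotone T).

Definition level (n : nat) (v : X) : Prop :=
  forall w ws, T w ws -> ws (bsub v w) <= INR n * (1 + bnorm X w).

Lemma level_closed n : closed_set X (level n).
Proof.
  intros p Hp.
  assert (Hviol : exists w ws, T w ws /\ INR n * (1 + bnorm X w) < ws (bsub p w)).
  { apply NNPP. intros Hno. apply Hp. intros w ws Hw. apply Rnot_lt_le.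
    intros Hlt. apply Hno. now exists w, ws. }
  destruct Hviol as [w [ws [Hw Hgap]]].
  pose proof (T_dual _ _ Hw) as Dw.
  destruct (lin_bound X ws Dw) as [M [HM HMb]].
  set (gap := ws (bsub p w) - INR n * (1 + bnorm X w)).
  exists (gap / (M + 1)). split; [apply Rdiv_lt_0_compat; unfold gap; lra|].
  intros q Hq Hlevel. specialize (Hlevel w ws Hw).
  assert (Hshift : ws (bsub q w) = ws (bsub p w) + ws (bsub q p))
    by (rewrite !(lin_sub X ws Dw); ring).
  assert (Hclose : M * bnorm X (bsub q p) < gap).
  { pose proof (bnorm_nonneg X (bsub q p)).
    apply Rle_lt_trans with ((M + 1) * bnorm X (bsub q p)); [nra|].
    apply (Rmult_lt_compat_l (M + 1)) in Hq; [|lra].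
    replace ((M + 1) * (gap / (M + 1))) with gap in Hq by (field; lra). exact Hq. }
  pose proof (HMb (bsub q p)). pose proof (Rle_abs (- ws (bsub q p))).
  rewrite Rabs_Ropp in *. unfold gap in Hclose. lra.
Qed.

Lemma level_mono n m v : (n <= m)%nat -> level n v -> level m v.
Proof.
  intros Hnm Hv w ws Hw. eapply Rle_trans; [exact (Hv w ws Hw)|].
  apply Rmult_le_compat_r; [pose proof (bnorm_nonneg X w); lra | now apply le_INR].
Qed.

(* By monotonicity, every point of the domain lies in some level set. *)
Lemma level_of_dom v : dom T v -> exists n, level n v.
Proof.
  intros [vs Hvs]. pose proof (T_dual _ _ Hvs) as Dv.
  destruct (lin_bound X vs Dv) as [M [HM HMb]].
  destruct (INR_unbounded (M * (1 + bnorm X v))) as [n Hn]. exists n.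
  intros w ws Hw. pose proof (T_mon v w vs ws Hvs Hw).
  pose proof (HMb (bsub v w)). pose proof (Rle_abs (vs (bsub v w))).
  pose proof (sub_norm_le X v w). pose proof (bnorm_nonneg X v).
  pose proof (bnorm_nonneg X w).
  assert (M * bnorm X (bsub v w) <= M * (1 + bnorm X v) * (1 + bnorm X w)).
  { apply Rle_trans with (M * (bnorm X v + bnorm X w)); [apply Rmult_le_compat_l; lra|].
    pose proof (Rmult_le_pos _ _ HM (Rmult_le_pos _ _ (bnorm_nonneg X v) (bnorm_nonneg X w))).
    nra. }
  assert (M * (1 + bnorm X v) * (1 + bnorm X w) <= INR n * (1 + bnorm X w))
    by (apply Rmult_le_compat_r; lra).
  lra.
Qed.

Lemma level_midpoint n p q m :
  level n p -> level n q -> (forall f, in_dual f -> f p + f q = 2 * f m) -> level n m.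
Proof.
  intros Hp Hq Hmid w ws Hw. pose proof (T_dual _ _ Hw) as Dw.
  specialize (Hp w ws Hw). specialize (Hq w ws Hw). specialize (Hmid ws Dw).
  rewrite (lin_sub X ws Dw) in *. lra.
Qed.

Lemma segment_bound (y a z : X) sa zs t M :
  T a sa -> T z zs -> 0 <= t < 1 ->
  z = badd X (bscal X (1 - t) y) (bscal X t a) ->
  sa (bsub a y) <= M * bnorm X (bsub a y) ->
  zs (bsub z y) <= M * bnorm X (bsub z y).
Proof.
  intros Hsa Hzs Ht Hz Hbound. pose proof (T_dual _ _ Hsa) as Da.
  pose proof (T_dual _ _ Hzs) as Dz. pose proof (T_mon _ _ _ _ Hzs Hsa) as Hmon.
  subst z. rewrite segment_sub, bnorm_scal, Rabs_pos_eq, (lin_scal X zs Dz) by lra.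
  rewrite (lin_sub X zs Dz), (lin_sub X sa Da), !(lin_add X zs Dz),
    !(lin_add X sa Da), !(lin_scal X zs Dz), !(lin_scal X sa Da) in Hmon.
  rewrite (lin_sub X sa Da) in Hbound. rewrite (lin_sub X zs Dz).
  (* Monotonicity between z and a reads (1 - t) (<z* - a*, a - y>) <= 0. *)
  assert (Hcompare : zs a - zs y <= sa a - sa y)
    by (apply Rmult_le_reg_l with (1 - t); lra).
  replace (M * (t * bnorm X (bsub a y))) with (t * (M * bnorm X (bsub a y))) by ring.
  apply Rmult_le_compat_l; lra.
Qed.

Variable x : X.

Definition reflect (v : X) : X := bsub (badd X x x) v.

Lemma reflect_dist p q : bnorm X (bsub (reflect q) (reflect p)) = bnorm X (bsub q p).
Proof. unfold reflect. now rewrite sub_sub_cancel, norm_sub_sym. Qed.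

Lemma reflect_center_dist v : bnorm X (bsub (reflect v) x) = bnorm X (bsub v x).
Proof.
  pose proof (reflect_dist x v) as E. unfold reflect at 2 in E.
  now rewrite add_sub in E.
Qed.

Lemma reflect_eval f v : in_dual f -> f (reflect v) = 2 * f x - f v.
Proof. intros Df. unfold reflect. rewrite (lin_sub X f Df), (lin_add X f Df). ring. Qed.

(* Baire gives a ball
   around some [c] inside [level n] and inside its reflection through [x];
   midpoint-convexity then moves that ball to [x]. *)
Lemma level_contains_ball e0 :
  0 < e0 -> (forall v, oball x e0 v -> dom T v) ->
  exists n rho, 0 < rho /\ forall v, bnorm X (bsub v x) < rho -> level n v.
Proof.
  intros He0 Hdom.
  destruct (baire X (fun n v => level n v /\ level n (reflect v)) x e0 He0)
    as [n [c [rho [Hrho Hball]]]].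
  - intros n. apply closed_and; [apply level_closed|].
    apply closed_preimage; [intros p q; rewrite reflect_dist; lra | apply level_closed].
  - intros v Hv.
    destruct (level_of_dom v (Hdom v Hv)) as [n1 H1].
    assert (Hr : oball x e0 (reflect v)) by (unfold oball; now rewrite reflect_center_dist).
    destruct (level_of_dom (reflect v) (Hdom _ Hr)) as [n2 H2].
    exists (max n1 n2). split.
    + apply (level_mono n1); [apply Nat.le_max_l | exact H1].
    + apply (level_mono n2); [apply Nat.le_max_r | exact H2].
  - exists n, rho. split; [exact Hrho|]. intros v Hv.
    set (u := bsub v x).
    assert (Hp : level n (badd X c u)).
    { apply Hball. now rewrite add_sub. }
    assert (Hq : level n (reflect (bsub c u))).
    { apply Hball. change (bsub c u) with (badd X c (bopp X u)).
      now rewrite add_sub, norm_opp. }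
    apply (level_midpoint n _ _ v Hp Hq). intros f Df.
    rewrite reflect_eval by exact Df.
    unfold u. rewrite (lin_add X f Df), !(lin_sub X f Df). ring.
Qed.

Lemma locally_bounded_of_level n rho :
  0 < rho -> (forall v, bnorm X (bsub v x) < rho -> level n v) ->
  exists M, 0 < M /\ forall a sa, T a sa -> bnorm X (bsub a x) < rho / 2 ->
    forall d, sa d <= M * bnorm X d.
Proof.
  intros Hrho Hlevel.
  set (M := 4 * INR n * (1 + bnorm X x + rho) / rho + 1).
  pose proof (pos_INR n). pose proof (bnorm_nonneg X x).
  assert (Hcoef0 : 0 <= 4 * INR n * (1 + bnorm X x + rho) / rho)
    by (unfold Rdiv; apply Rmult_le_pos; [nra | left; apply Rinv_0_lt_compat; lra]).
  exists M. split; [unfold M; lra|].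
  intros a sa Hsa Ha d. pose proof (T_dual _ _ Hsa) as Da.
  assert (Hball : forall d, bnorm X d < rho / 2 -> sa d <= INR n * (1 + bnorm X a)).
  { intros d' Hd'. specialize (Hlevel (badd X a d')).
    rewrite <- (add_sub X a d') at 1. apply Hlevel; [|exact Hsa].
    pose proof (norm_sub_tri X (badd X a d') a x). rewrite add_sub in *. lra. }
  pose proof (lin_bound_of_ball X sa Da _ (rho / 2) ltac:(lra) Hball d) as Hd.
  assert (Hcoef : 2 * (INR n * (1 + bnorm X a)) / (rho / 2) <= M).
  { pose proof (norm_le_sub X a x).
    replace (2 * (INR n * (1 + bnorm X a)) / (rho / 2))
      with (4 * INR n * (1 + bnorm X a) / rho) by (field; lra).
    unfold M. apply Rle_trans with (4 * INR n * (1 + bnorm X x + rho) / rho); [|lra].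
    unfold Rdiv. apply Rmult_le_compat_r; [left; apply Rinv_0_lt_compat; lra|].
    apply Rmult_le_compat_l; lra. }
  eapply Rle_trans; [exact Hd|].
  apply Rmult_le_compat_r; [apply bnorm_nonneg | exact Hcoef].
Qed.
End MonotoneOperator.

(* Lemma 2.13: a maximal monotone operator is directionally inf bounded at
   every interior point of its domain.  Only monotonicity and the fact that
   [T] takes values in the dual are needed. *)
Theorem lemma2p13 (X : Banach) (T : operator X) :
  maximal_monotone T ->
  (exists x0 : X, int_pts (dom T) x0) ->
  forall x : X, int_pts (dom T) x -> directionally_inf_bounded T x.
Proof.
  intros [T_dual [T_mon _]] _ x [e0 [He0 Hint]].
  destruct (level_contains_ball X T T_dual T_mon x e0 He0 Hint)
    as [n [rho [Hrho Hlevel]]].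
  destruct (locally_bounded_of_level X T T_dual x n rho Hrho Hlevel)
    as [M [HM Hbound]].
  split.
  { apply Hint. unfold oball. now rewrite sub_self, norm0. }
  intros y. exists (Rmin (rho / 2) e0), M.
  split; [apply Rmin_glb_lt; lra|]. split; [exact HM|].
  intros z [t [a [Ht [Ha Hz]]]] [zs Hzs]. unfold oball in Ha.
  assert (Ha_near : bnorm X (bsub a x) < rho / 2)
    by (eapply Rlt_le_trans; [exact Ha | apply Rmin_l]).
  assert (Ha_dom : oball x e0 a)
    by (eapply Rlt_le_trans; [exact Ha | apply Rmin_r]).
  destruct (Hint a Ha_dom) as [sa Hsa].
  destruct (Req_dec t 1) as [Ht1|Ht1].
  - subst t. rewrite segment_end in Hz. subst z.
    exists sa. split; [exact Hsa | exact (Hbound a sa Hsa Ha_near _)].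
  - exists zs. split; [exact Hzs|].
    apply (segment_bound X T T_dual T_mon y a z sa zs t M Hsa Hzs ltac:(lra) Hz).
    exact (Hbound a sa Hsa Ha_near _).
Qed.
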